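(* Let $n\ge 1$, let $\rho\in(0,1)$, $\alpha\ge 0$, and let $F:\mathbb{R}^n\to\mathbb{R}^n$ be $\rho$-Lipschitz (Euclidean norm). Assume there exist a symmetric positive semidefinite matrix $G\in\mathbb{R}^{n\times n}$ with $G\preccurlyeq \rho I$ and an $\alpha$-Lipschitz map $\xi:\mathbb{R}^n\to\mathbb{R}^n$ such that $F(x)=Gx+\xi(x)$ for all $x$. Let $C\ge 1$, let $k\ge 1$ be an integer, let $x_0\in\mathbb{R}^n$, and let $x_e$ be the output of the Constrained Anderson Acceleration procedure (described in the context) started at $x_0$ with parameters $C$ and $k$. Then $$\|F(x_e)-x_e\|\le\Big(\max_{x\in[0,\rho]}|p_*(x)|+3C\alpha k\Big)\|F(x_0)-x_0\|,$$ where $p_*$ is any minimizer of $\max_{x\in[0,\rho]}|p(x)|$ over all $p\in\mathbb{R}_k[X]$ with $p(1)=1$ and $\|p\|_1\le C$.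
   Context: $\|\cdot\|$ denotes the Euclidean norm on $\mathbb{R}^n$. $\mathbb{R}_k[X]$ is the space of real polynomials of degree at most $k$, and for $p=\sum_{i=0}^k p_iX^i$, $\|p\|_1=\sum_{i=0}^k|p_i|$ (the $\ell_1$ norm of the coefficient vector); for a vector $c$, $\|c\|_1=\sum_i|c_i|$. Constrained Anderson Acceleration (CAA) with input $x_0$, constraint bound $C$ and integer $k$: set $x_{i+1}=F(x_i)$ for $i=0,\dots,k$; form the matrix $R=[x_0-x_1,\ x_1-x_2,\ \dots,\ x_k-x_{k+1}]\in\mathbb{R}^{n\times(k+1)}$; compute $\tilde c\in\arg\min\{\|Rc\| : c\in\mathbb{R}^{k+1},\ \mathbf{1}^Tc=1,\ \|c\|_1\le C\}$; output $x_e=\sum_{i=0}^k\tilde c_i x_i$. *)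

From HB Require Import structures.
From mathcomp Require Import all_boot all_order all_algebra.
From mathcomp Require Import classical_sets reals.
Set Implicit Arguments. Unset Strict Implicit. Unset Printing Implicit Defensive.
Import Order.TTheory GRing.Theory Num.Theory.
Local Open Scope ring_scope.
Local Open Scope classical_set_scope.

Section Defs.
Variable R : realType.

Definition enorm (n : nat) (v : 'cV[R]_n) : R := Num.sqrt (\sum_i (v i 0) ^+ 2).

Definition l1vec (m : nat) (c : 'cV[R]_m) : R := \sum_i `|c i 0|.

Definition l1poly (p : {poly R}) : R := \sum_(i < size p) `|p`_i|.

Definition lipschitz (n : nat) (L : R) (f : 'cV[R]_n -> 'cV[R]_n) : Prop :=
  forall x y, enorm (f x - f y) <= L * enorm (x - y).

Definition caa_matrix (n : nat) (F : 'cV[R]_n -> 'cV[R]_n) (x0 : 'cV[R]_n) (k : nat)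
  : 'M[R]_(n, k.+1) :=
  \matrix_(r < n, j < k.+1) ((iter j F x0) r 0 - (iter j.+1 F x0) r 0).

Definition caa_feasible (k : nat) (C : R) (c : 'cV[R]_k.+1) : Prop :=
  \sum_i c i 0 = 1 /\ l1vec c <= C.

Definition caa_coeff (n : nat) (F : 'cV[R]_n -> 'cV[R]_n) (x0 : 'cV[R]_n)
  (C : R) (k : nat) (c : 'cV[R]_k.+1) : Prop :=
  caa_feasible C c /\
  forall c' : 'cV[R]_k.+1, caa_feasible C c' ->
    enorm (caa_matrix F x0 k *m c) <= enorm (caa_matrix F x0 k *m c').

Definition caa_output (n : nat) (F : 'cV[R]_n -> 'cV[R]_n) (x0 : 'cV[R]_n)
  (k : nat) (c : 'cV[R]_k.+1) : 'cV[R]_n :=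
  \sum_(i < k.+1) c i 0 *: iter i F x0.

(* max_{x in [0, rho]} |p(x)| (a max since [0,rho] is compact and p continuous). *)
Definition maxabs (rho : R) (p : {poly R}) : R :=
  sup [set `|p.[x]| | x in [set x : R | 0 <= x <= rho]].

Definition poly_admissible (k : nat) (C : R) (p : {poly R}) : Prop :=
  (size p <= k.+1)%N /\ p.[1] = 1 /\ l1poly p <= C.

Definition poly_minimizer (k : nat) (C rho : R) (p : {poly R}) : Prop :=
  poly_admissible k C p /\
  forall q, poly_admissible k C q -> maxabs rho p <= maxabs rho q.

End Defs.

From HB Require Import structures.
From mathcomp Require Import all_boot all_order all_algebra.
From mathcomp Require Import classical_sets reals.
From mathcomp Require Import ring lra.
From mathcomp Require Import complex.
Import Order.TTheory GRing.Theory Num.Theory.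
Set Implicit Arguments. Unset Strict Implicit. Unset Printing Implicit Defensive.
Local Open Scope ring_scope.

(* Let r_i = x_i - x_(i+1) be the residuals of the fixed-point iteration and N = |r_0|.
   Since G is symmetric with spectrum in [0, rho], the spectral theorem (applied to the
   complexification of G) gives |p(G) v| <= max_[0,rho] |p| * |v| for every polynomial p.
   As F = G + xi with xi alpha-Lipschitz, r_j equals G^j r_0 up to an error j alpha N, so
   the coefficient vector of p_* is feasible and has residual
   |R c| <= (max_[0,rho] |p_*| + C k alpha) N; the CAA coefficients do at least as well.
   Finally, F(x_e) - x_e equals -R c up to the nonlinearity of F along the affine
   combination x_e, which costs at most 2 C k alpha N. *)

Section EuclideanNorm.
Variables (R : realType) (m : nat).
Implicit Types (u v w : 'cV[R]_m) (a : R).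

Definition dotv u v : R := (u^T *m v) 0 0.

Lemma dotvE u v : dotv u v = \sum_i u i 0 * v i 0.
Proof. by rewrite /dotv mxE; apply: eq_bigr => i _; rewrite mxE. Qed.

Lemma dotvC u v : dotv u v = dotv v u.
Proof. by rewrite !dotvE; apply: eq_bigr => i _; rewrite mulrC. Qed.

Lemma dotvDl u v w : dotv (u + v) w = dotv u w + dotv v w.
Proof. by rewrite /dotv linearD mulmxDl mxE. Qed.

Lemma dotvZl a u w : dotv (a *: u) w = a * dotv u w.
Proof. by rewrite /dotv linearZ -scalemxAl mxE. Qed.

Lemma dotvNl u w : dotv (- u) w = - dotv u w.
Proof. by rewrite -scaleN1r dotvZl mulN1r. Qed.

Lemma dotvDr u v w : dotv w (u + v) = dotv w u + dotv w v.
Proof. by rewrite dotvC dotvDl !(dotvC w). Qed.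

Lemma dotvZr a u w : dotv w (a *: u) = a * dotv w u.
Proof. by rewrite dotvC dotvZl dotvC. Qed.

Lemma dotvNr u w : dotv w (- u) = - dotv w u.
Proof. by rewrite dotvC dotvNl dotvC. Qed.

Lemma dotvv_ge0 v : 0 <= dotv v v.
Proof. by rewrite dotvE sumr_ge0 // => i _; rewrite -expr2 sqr_ge0. Qed.

Lemma dotvv_eq0 v : (dotv v v == 0) = (v == 0).
Proof.
apply/idP/eqP => [|->]; last by rewrite /dotv mulmx0 mxE.
rewrite dotvE psumr_eq0 => [/allP v0|i _]; last by rewrite -expr2 sqr_ge0.
apply/matrixP => i j; rewrite ord1 mxE.
by have := v0 i (mem_index_enum i); rewrite /= mulf_eq0 orbb => /eqP.
Qed.

Lemma dotv_Cauchy_Schwarz u v : dotv u v ^+ 2 <= dotv u u * dotv v v.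
Proof.
have [v0|vv_neq0] := eqVneq v 0.
  by rewrite v0 /dotv !mulmx0 mxE expr0n mulr0.
have vv_gt0 : 0 < dotv v v by rewrite lt_def dotvv_eq0 vv_neq0 dotvv_ge0.
have := dotvv_ge0 (dotv v v *: u - dotv u v *: v).
rewrite !(dotvDl, dotvDr, dotvZl, dotvZr, dotvNl, dotvNr) (dotvC v u).
set a := dotv u u; set b := dotv u v; set c := dotv v v => expand_ge0.
suff : 0 <= c * (a * c - b ^+ 2) by rewrite pmulr_rge0 // subr_ge0 mulrC.
nra.
Qed.

Lemma enormE v : enorm v = Num.sqrt (dotv v v).
Proof. by rewrite /enorm dotvE; congr Num.sqrt; apply: eq_bigr => i _; rewrite expr2. Qed.

Lemma enorm_ge0 v : 0 <= enorm v.
Proof. exact: sqrtr_ge0. Qed.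

Lemma enorm_sqr v : enorm v ^+ 2 = dotv v v.
Proof. by rewrite enormE sqr_sqrtr // dotvv_ge0. Qed.

Lemma dotv_le_enorm u v : dotv u v <= enorm u * enorm v.
Proof.
apply: le_trans (ler_norm _) _; rewrite -sqrtr_sqr !enormE -sqrtrM ?dotvv_ge0 //.
by rewrite ler_wsqrtr // dotv_Cauchy_Schwarz.
Qed.

Lemma enorm0 : enorm (0 : 'cV[R]_m) = 0.
Proof. by rewrite enormE /dotv mulmx0 mxE sqrtr0. Qed.

Lemma enormD u v : enorm (u + v) <= enorm u + enorm v.
Proof.
rewrite -(@ler_pXn2r _ 2) ?nnegrE ?addr_ge0 ?enorm_ge0 //.
rewrite enorm_sqr !(dotvDl, dotvDr) sqrrD !enorm_sqr (dotvC v u).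
have := dotv_le_enorm u v; lra.
Qed.

Lemma enormZ a v : enorm (a *: v) = `|a| * enorm v.
Proof. by rewrite !enormE dotvZl dotvZr mulrA -expr2 sqrtrM ?sqrtr_sqr ?sqr_ge0. Qed.

Lemma enormN v : enorm (- v) = enorm v.
Proof. by rewrite -scaleN1r enormZ normrN normr1 mul1r. Qed.

Lemma enormB u v : enorm (u - v) = enorm (v - u).
Proof. by rewrite -enormN opprB. Qed.

Lemma enorm_sum (I : Type) (r : seq I) (P : pred I) (f : I -> 'cV[R]_m) :
  enorm (\sum_(i <- r | P i) f i) <= \sum_(i <- r | P i) enorm (f i).
Proof.
elim/big_rec2: _ => [|i y1 y2 _ IH]; first by rewrite enorm0.
by apply: le_trans (enormD _ _) _; rewrite lerD2l.
Qed.

Lemma enorm_lincomb_le (I : finType) (a : I -> R) (f : I -> 'cV[R]_m) (B : R) :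
  (forall i, enorm (f i) <= B) -> enorm (\sum_i a i *: f i) <= (\sum_i `|a i|) * B.
Proof.
move=> fB; apply: le_trans (enorm_sum _ _ _) _; rewrite mulr_suml.
by apply: ler_sum => i _; rewrite enormZ ler_wpM2l.
Qed.

End EuclideanNorm.

Definition qform (R : pzRingType) n (G : 'M[R]_n) (v : 'cV[R]_n) : R := (v^T *m G *m v) 0 0.

Section Complexification.
Variable R : realType.
Local Notation toC := (real_complex R).
Local Open Scope sesquilinear_scope.

Lemma real_complex_real (x : R) : toC x \is Num.real.
Proof. by apply/complex_realP; exists x. Qed.

Lemma conj_real_complex (x : R) : (toC x)^* = toC x.
Proof. exact/conj_Creal/real_complex_real. Qed.

Lemma trmxC_real_complex p q (M : 'M[R]_(p, q)) : (map_mx toC M)^t* = map_mx toC M^T.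
Proof. by apply/matrixP => i j; rewrite !mxE conj_real_complex. Qed.

Lemma trmxC_mul p q r (X : 'M[R[i]]_(p, q)) (Y : 'M[R[i]]_(q, r)) :
  (X *m Y)^t* = Y^t* *m X^t*.
Proof. by rewrite trmx_mul map_mxM. Qed.

Lemma mx_Re_Im p q (Z : 'M[R[i]]_(p, q)) :
  Z = map_mx toC (map_mx (@complex.Re R) Z) + 'i *: map_mx toC (map_mx (@complex.Im R) Z).
Proof. by apply/matrixP => i j; rewrite !mxE [LHS]complexE. Qed.

Lemma trmx11 (T : Type) (M : 'M[T]_1) : M^T = M.
Proof. by apply/matrixP => i j; rewrite !ord1 mxE. Qed.

Lemma qformC n (G : 'M[R]_n) (z : 'cV[R[i]]_n) : G^T = G ->
  (z^t* *m map_mx toC G *m z) 0 0 =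
  toC (qform G (map_mx (@complex.Re R) z) + qform G (map_mx (@complex.Im R) z)).
Proof.
move=> Gsym; rewrite [in LHS](mx_Re_Im z).
set a := map_mx _ z; set b := map_mx _ z.
set A := map_mx toC a; set B := map_mx toC b; set GC := map_mx toC G.
have -> : (A + 'i *: B)^t* = A^T - 'i *: B^T.
  apply/matrixP => i j; rewrite !mxE rmorphD rmorphM /= !conj_real_complex conjCi.
  by rewrite mulNr.
have cross : A^T *m GC *m B = B^T *m GC *m A.
  have GCsym : GC^T = GC by rewrite /GC map_trmx Gsym.
  by rewrite -[LHS]trmx11 !trmx_mul trmxK GCsym mulmxA.
rewrite !mulmxDl !mulmxDr !mulNmx -!scalemxAl -!scalemxAr scalerA cross.
rewrite -expr2 sqrCi scaleN1r opprK addrA addrK.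
suff -> : A^T *m GC *m A + B^T *m GC *m B = map_mx toC (a^T *m G *m a + b^T *m G *m b).
  by rewrite /qform !mxE.
by rewrite map_mxD !map_mxM !map_trmx.
Qed.

Lemma trC_mul_real_complex p q (u : 'M[R]_(q, p)) :
  (map_mx toC u)^t* *m map_mx toC u = map_mx toC (u^T *m u).
Proof. by rewrite trmxC_real_complex map_mxM. Qed.

Lemma trC_mul_entry n (X : 'cV[R[i]]_n) :
  (X^t* *m X) 0 0 = \sum_j (X j 0)^* * X j 0.
Proof. by rewrite mxE; apply: eq_bigr => j _; rewrite !mxE. Qed.

End Complexification.

Lemma qform1 (R : pzRingType) n (v : 'cV[R]_n) : qform 1%:M v = (v^T *m v) 0 0.
Proof. by rewrite /qform mulmx1. Qed.

Section SpectralBound.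
Variables (R : realType) (n : nat) (G : 'M[R]_n.+1) (rho : R).
Hypotheses (Gsym : G^T = G) (G_ge0 : forall v, 0 <= qform G v)
  (G_le : forall v, qform G v <= rho * dotv v v).
Local Notation toC := (real_complex R).
Local Notation A := (map_mx toC G).
Local Notation P := (spectralmx A).
Local Notation D := (spectral_diag A).
Local Open Scope sesquilinear_scope.

Lemma hermsym_real_complex : A \is hermsymmx.
Proof.
apply: realsym_hermsym.
  apply/is_hermitianmxP; rewrite expr0 scale1r.
  by apply/matrixP => i j; rewrite !mxE /=; have /matrixP/(_ j i) := Gsym; rewrite mxE => ->.
by apply/mxOverP => i j; rewrite mxE real_complex_real.
Qed.

Lemma spectralmx_trC_mul : P^t* *m P = 1%:M.
Proof. by rewrite -invmx_unitary ?spectral_unitarymx // mulVmx ?spectral_unit. Qed.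

Lemma spectralmx_mul_trC : P *m P^t* = 1%:M.
Proof. exact/unitarymxP/spectral_unitarymx. Qed.

Lemma spectral_decomp : A = P^t* *m diag_mx D *m P.
Proof.
rewrite -invmx_unitary ?spectral_unitarymx //.
exact/orthomx_spectralP/hermitian_normalmx/hermsym_real_complex.
Qed.

(* D_j is the Rayleigh quotient of the unit vector P^* e_j. *)
Lemma spectral_diag_range j : exists2 t, D 0 j = toC t & 0 <= t <= rho.
Proof.
pose z : 'cV_n.+1 := P^t* *m delta_mx j 0.
have zC : z^t* = delta_mx 0 j *m P.
  by rewrite /z trmxC_mul trmxCK trmx_delta map_delta_mx.
have zAz : (z^t* *m A *m z) 0 0 = D 0 j.
  rewrite zC /z [X in _ *m X *m _]spectral_decomp !mulmxA -(mulmxA _ P (P^t* )) spectralmx_mul_trC.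
  rewrite mulmx1 -(mulmxA _ P (P^t* )) spectralmx_mul_trC mulmx1 -rowE -colE !mxE eqxx.
  by rewrite mulr1n.
have zz : (z^t* *m 1%:M *m z) 0 0 = 1.
  rewrite mulmx1 zC /z !mulmxA -(mulmxA _ P (P^t* )) spectralmx_mul_trC mulmx1.
  by rewrite mul_delta_mx mxE !eqxx.
rewrite qformC // in zAz; rewrite -(map_mx1 toC) qformC ?trmx1 // in zz.
move: zz; rewrite !qform1 -(rmorph1 toC) => /complexI zz.
set a := map_mx _ z in zAz zz; set b := map_mx _ z in zAz zz.
exists (qform G a + qform G b) => //.
rewrite addr_ge0 ?G_ge0 //=; apply: le_trans (lerD (G_le a) (G_le b)) _.
by rewrite -mulrDr zz mulr1.
Qed.

Lemma dotv_horner_mx_le (p : {poly R}) (M : R) (v : 'cV[R]_n.+1) :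
  (forall x, 0 <= x <= rho -> `|p.[x]| <= M) ->
  dotv (horner_mx G p *m v) (horner_mx G p *m v) <= M ^+ 2 * dotv v v.
Proof.
move=> pM; set w := horner_mx G p *m v; rewrite -lecR rmorphM /=.
have toC_entry (X : 'M[R]_1) : toC (X 0 0) = map_mx toC X 0 0 by rewrite mxE.
rewrite /dotv !toC_entry -!trC_mul_real_complex.
set y := P *m map_mx toC v.
have -> : (map_mx toC v)^t* *m map_mx toC v = y^t* *m y.
  by rewrite /y trmxC_mul !mulmxA -(mulmxA _ (P^t* )) spectralmx_trC_mul mulmx1.
set E := map_mx (horner (map_poly toC p)) D.
have -> : map_mx toC w = P^t* *m (diag_mx E *m y).
  rewrite /w map_mxM map_horner_mx [X in horner_mx X]spectral_decomp.
  rewrite -invmx_unitary ?spectral_unitarymx // horner_mx_uconjC ?spectral_unit //.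
  by rewrite horner_mx_diag !mulmxA.
rewrite trmxC_mul trmxCK mulmxA -(mulmxA _ P (P^t* )) spectralmx_mul_trC mulmx1.
rewrite !trC_mul_entry mulr_sumr; apply: ler_sum => j _.
have [t Dj /pM pt_le] := spectral_diag_range j.
rewrite mul_diag_mx mxE [E 0 j]mxE Dj horner_map rmorphM /= conj_real_complex.
have -> : toC p.[t] * (y j 0)^* * (toC p.[t] * y j 0) =
          toC (p.[t] ^+ 2) * ((y j 0)^* * y j 0).
  by rewrite rmorphXn /= expr2; ring.
apply: ler_wpM2r; first by rewrite mulrC mul_conjC_ge0.
rewrite lecR -(real_normK (num_real p.[t])) ler_pXn2r ?nnegrE //.
exact: le_trans (normr_ge0 _) pt_le.
Qed.

Lemma enorm_horner_mx_le (p : {poly R}) (M : R) (v : 'cV[R]_n.+1) : 0 <= M ->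
  (forall x, 0 <= x <= rho -> `|p.[x]| <= M) ->
  enorm (horner_mx G p *m v) <= M * enorm v.
Proof.
move=> M_ge0 pM; rewrite -(@ler_pXn2r _ 2) ?nnegrE ?mulr_ge0 ?enorm_ge0 //.
by rewrite exprMn !enorm_sqr dotv_horner_mx_le.
Qed.

Lemma enorm_mulmx_le (v : 'cV[R]_n.+1) : rho <= 1 -> enorm (G *m v) <= enorm v.
Proof.
move=> rho_le1; rewrite -[G in G *m v]horner_mx_X -[enorm v]mul1r.
apply: enorm_horner_mx_le => // x /andP[x0 xrho].
by rewrite hornerX ger0_norm // (le_trans xrho).
Qed.

End SpectralBound.

Section PolyCoefs.
Variable R : realType.
Implicit Types (p : {poly R}) (d : nat).

Lemma poly_coef_wide d p : (size p <= d)%N -> \poly_(i < d) p`_i = p.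
Proof.
move=> pd; apply/polyP => i; rewrite coef_poly; case: ltnP => // di.
by rewrite nth_default // (leq_trans pd).
Qed.

Lemma horner_mx_coef_wide n d (A : 'M[R]_n.+1) p : (size p <= d)%N ->
  horner_mx A p = \sum_(i < d) p`_i *: A ^+ i.
Proof.
move=> pd; rewrite -{1}(poly_coef_wide pd) poly_def linear_sum /=.
by apply: eq_bigr => i _; rewrite linearZ rmorphXn /= horner_mx_X.
Qed.

Lemma l1vec_poly_rV d p : (size p <= d)%N -> l1vec (poly_rV p : 'rV_d)^T = l1poly p.
Proof.
move=> pd; rewrite /l1vec /l1poly (big_ord_widen _ (fun i => `|p`_i|) pd) [RHS]big_mkcond.
apply: eq_bigr => i _; rewrite !mxE; case: ltnP => // /(nth_default 0) ->.
by rewrite normr0.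
Qed.

Lemma sum_poly_rV d p : (size p <= d)%N -> \sum_i (poly_rV p : 'rV_d)^T i 0 = p.[1].
Proof.
move=> pd; rewrite (horner_coef_wide _ pd).
by apply: eq_bigr => i _; rewrite !mxE expr1n mulr1.
Qed.

Lemma norm_horner_le_maxabs rho p y : 0 <= y <= rho -> `|p.[y]| <= maxabs rho p.
Proof.
move=> y_range; apply: ub_le_sup; last by exists y.
exists (\sum_(i < size p) `|p`_i| * rho ^+ i) => _ [z /andP[z0 zrho] <-].
rewrite horner_coef; apply: le_trans (ler_norm_sum _ _ _) _.
apply: ler_sum => i _; rewrite normrM normrX ler_wpM2l // ger0_norm //.
by rewrite lerXn2r // nnegrE (le_trans z0).
Qed.

End PolyCoefs.

Lemma affine_combB (R : pzRingType) (V : lmodType R) (I : finType) (a : I -> R)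
    (f : I -> V) (w : V) :
  \sum_i a i = 1 -> \sum_i a i *: (f i - w) = \sum_i a i *: f i - w.
Proof.
by move=> a1; rewrite (eq_bigr _ (fun i _ => scalerBr _ _ _)) sumrB -scaler_suml a1 scale1r.
Qed.

Definition iter_residual (R : realType) n (F : 'cV[R]_n -> 'cV[R]_n) x0 i :=
  iter i F x0 - iter i.+1 F x0.

Section Iterates.
Variables (R : realType) (n : nat) (F : 'cV[R]_n -> 'cV[R]_n) (x0 : 'cV[R]_n).
Local Notation r := (iter_residual F x0).

Lemma caa_matrix_mulmx k (d : 'cV[R]_k.+1) :
  caa_matrix F x0 k *m d = \sum_j d j 0 *: r j.
Proof.
apply/matrixP => a b; rewrite ord1 !mxE summxE; apply: eq_bigr => j _.
by rewrite !mxE mulrC.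
Qed.

Variable rho : R.
Hypotheses (rho_le1 : rho <= 1) (F_lip : lipschitz rho F).

Lemma enorm_iter_residual_le i : enorm (r i) <= enorm (r 0).
Proof.
elim: i => // i IH; apply: le_trans IH; apply: le_trans (F_lip _ _) _.
by rewrite ler_piMl ?enorm_ge0.
Qed.

Lemma enorm_iter_sub_le i : enorm (iter i F x0 - x0) <= i%:R * enorm (r 0).
Proof.
elim: i => [|i IH]; first by rewrite subrr enorm0 mul0r.
rewrite -(subrKA (iter i F x0)) addrC -natr1 mulrDl mul1r.
by apply: le_trans (enormD _ _) _; rewrite lerD // enormB enorm_iter_residual_le.
Qed.

End Iterates.

Section PerturbedLinearMap.
Variables (R : realType) (n : nat) (G : 'M[R]_n) (xi : 'cV[R]_n -> 'cV[R]_n) (alpha : R).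
Variable F : 'cV[R]_n -> 'cV[R]_n.
Hypotheses (alpha_ge0 : 0 <= alpha) (xi_lip : lipschitz alpha xi)
  (F_dec : forall x, F x = G *m x + xi x).

Lemma perturbed_mapB a b : F a - F b = G *m (a - b) + (xi a - xi b).
Proof. by rewrite !F_dec mulmxBr opprD addrACA. Qed.

(* As sum_i c_i = 1, the linear part of F cancels and only xi contributes. *)
Lemma enorm_affine_defect_le (I : finType) (c : I -> R) (y : I -> 'cV[R]_n) w B :
  \sum_i c i = 1 -> (forall i, enorm (y i - w) <= B) ->
  enorm (F (\sum_i c i *: y i) - \sum_i c i *: F (y i)) <= 2%:R * alpha * (\sum_i `|c i|) * B.
Proof.
move=> c1 yB; set ybar := \sum_i c i *: y i.
have -> : F ybar - \sum_i c i *: F (y i) =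
    (xi ybar - xi w) - \sum_i c i *: (xi (y i) - xi w).
  rewrite affine_combB // F_dec.
  under eq_bigr do rewrite F_dec scalerDr scalemxAr.
  by rewrite big_split /= -mulmx_sumr opprD addrACA subrr add0r opprB addrA subrK.
have ybar_w : enorm (ybar - w) <= (\sum_i `|c i|) * B.
  by rewrite -affine_combB // enorm_lincomb_le.
apply: le_trans (enormD _ _) _; rewrite enormN mulr2n !mulrDl !mul1r.
apply: lerD; first by apply: le_trans (xi_lip _ _) _; rewrite -mulrA ler_wpM2l.
rewrite -mulrA mulrCA; apply: enorm_lincomb_le => i.
by apply: le_trans (xi_lip _ _) _; rewrite ler_wpM2l.
Qed.

Variables (x0 : 'cV[R]_n) (rho : R).
Hypotheses (rho_le1 : rho <= 1) (F_lip : lipschitz rho F)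
  (G_contr : forall v, enorm (G *m v) <= enorm v).
Local Notation r := (iter_residual F x0).

Lemma enorm_residual_linearization_le i :
  enorm (r i - G ^+ i *m r 0) <= i%:R * alpha * enorm (r 0).
Proof.
elim: i => [|i IH]; first by rewrite expr0 mul1mx subrr enorm0 !mul0r.
have -> : r i.+1 - G ^+ i.+1 *m r 0 =
    G *m (r i - G ^+ i *m r 0) + (xi (iter i F x0) - xi (iter i.+1 F x0)).
  have -> : r i.+1 = F (iter i F x0) - F (iter i.+1 F x0) by [].
  by rewrite perturbed_mapB exprS -mulmxA addrAC -mulmxBr.
apply: le_trans (enormD _ _) _; rewrite -natr1 !mulrDl !mul1r.
apply: lerD; first exact: le_trans (G_contr _) IH.
apply: le_trans (xi_lip _ _) _; rewrite ler_wpM2l //.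
exact: enorm_iter_residual_le rho_le1 F_lip i.
Qed.

Lemma enorm_caa_output_residual_le k (c : 'cV[R]_k.+1) : \sum_i c i 0 = 1 ->
  enorm (F (caa_output F x0 c) - caa_output F x0 c) <=
    enorm (caa_matrix F x0 k *m c) + 2%:R * alpha * l1vec c * (k%:R * enorm (r 0)).
Proof.
move=> c1; set xe := caa_output F x0 c; set Fxs := \sum_j c j 0 *: F (iter j F x0).
have -> : F xe - xe = (F xe - Fxs) - caa_matrix F x0 k *m c.
  rewrite caa_matrix_mulmx /iter_residual.
  under eq_bigr do rewrite scalerBr.
  by rewrite sumrB opprB addrA subrK.
apply: le_trans (enormD _ _) _; rewrite enormN addrC lerD2l.
apply: (@enorm_affine_defect_le _ _ _ x0) => // j.
apply: le_trans (enorm_iter_sub_le x0 rho_le1 F_lip j) _.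
by rewrite ler_wpM2r ?enorm_ge0 // ler_nat -ltnS.
Qed.

End PerturbedLinearMap.

Section CAAPolynomialResidual.
Variables (R : realType) (n : nat) (G : 'M[R]_n.+1) (xi : 'cV[R]_n.+1 -> 'cV[R]_n.+1).
Variables (F : 'cV[R]_n.+1 -> 'cV[R]_n.+1) (x0 : 'cV[R]_n.+1) (alpha rho : R) (k : nat).
Hypotheses (alpha_ge0 : 0 <= alpha) (xi_lip : lipschitz alpha xi)
  (F_dec : forall x, F x = G *m x + xi x) (rho_le1 : rho <= 1) (F_lip : lipschitz rho F).
Hypotheses (Gsym : G^T = G) (G_ge0 : forall v, 0 <= qform G v)
  (G_le : forall v, qform G v <= rho * dotv v v).
Local Notation r := (iter_residual F x0).

Lemma enorm_caa_matrix_poly_le (p : {poly R}) (M : R) :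
  (size p <= k.+1)%N -> 0 <= M -> (forall y, 0 <= y <= rho -> `|p.[y]| <= M) ->
  enorm (caa_matrix F x0 k *m (poly_rV p)^T) <=
    M * enorm (r 0) + l1poly p * (k%:R * alpha * enorm (r 0)).
Proof.
move=> p_size M_ge0 pM; set cp := (poly_rV p)^T.
have -> : caa_matrix F x0 k *m cp =
    horner_mx G p *m r 0 + \sum_j cp j 0 *: (r j - G ^+ j *m r 0).
  rewrite caa_matrix_mulmx (horner_mx_coef_wide _ p_size) mulmx_suml -big_split /=.
  by apply: eq_bigr => j _; rewrite /cp !mxE -scalemxAl -scalerDr addrC subrK.
apply: le_trans (enormD _ _) _; apply: lerD; first exact: enorm_horner_mx_le.
rewrite -(l1vec_poly_rV p_size); apply: enorm_lincomb_le => j.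
have G_contr v : enorm (G *m v) <= enorm v by exact: enorm_mulmx_le.
apply: le_trans
  (enorm_residual_linearization_le alpha_ge0 xi_lip F_dec x0 rho_le1 F_lip G_contr j) _.
by rewrite !ler_wpM2r ?enorm_ge0 // ler_nat -ltnS.
Qed.

End CAAPolynomialResidual.

Theorem proposition2 (R : realType) (n : nat) (hn : (1 <= n)%N)
  (rho alpha : R) (hrho0 : 0 < rho) (hrho1 : rho < 1) (halpha : 0 <= alpha)
  (F : 'cV[R]_n -> 'cV[R]_n) (hF : lipschitz rho F)
  (G : 'M[R]_n) (xi : 'cV[R]_n -> 'cV[R]_n)
  (hGsym : G^T = G)
  (hGpsd : forall v : 'cV[R]_n, 0 <= (v^T *m G *m v) 0 0)
  (hGle : forall v : 'cV[R]_n, (v^T *m G *m v) 0 0 <= rho * (v^T *m v) 0 0)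
  (hxi : lipschitz alpha xi)
  (hFdec : forall x, F x = G *m x + xi x)
  (C : R) (hC : 1 <= C) (k : nat) (hk : (1 <= k)%N) (x0 : 'cV[R]_n)
  (c : 'cV[R]_k.+1) (hc : caa_coeff F x0 C c)
  (pstar : {poly R}) (hp : poly_minimizer k C rho pstar) :
  let xe := caa_output F x0 c in
  enorm (F xe - xe) <=
    (maxabs rho pstar + 3%:R * C * alpha * k%:R) * enorm (F x0 - x0).
Proof.
case: n => [//|n] in hn F hF G xi hGsym hGpsd hGle hxi hFdec x0 c hc *.
have rho_le1 := ltW hrho1.
have [[c_sum c_l1] c_min] := hc; have [[p_size [p_one p_l1]] _] := hp.
have -> : enorm (F x0 - x0) = enorm (iter_residual F x0 0) by rewrite enormB.
have pstar_feasible : caa_feasible C (poly_rV pstar : 'rV_k.+1)^T.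
  by split; rewrite ?sum_poly_rV ?l1vec_poly_rV.
have maxabs_ge0 : 0 <= maxabs rho pstar.
  by apply: le_trans (normr_ge0 pstar.[0]) (norm_horner_le_maxabs _ _); rewrite lexx ltW.
have Rc_le := le_trans (c_min _ pstar_feasible)
  (enorm_caa_matrix_poly_le x0 halpha hxi hFdec rho_le1 hF hGsym hGpsd hGle p_size
     maxabs_ge0 (@norm_horner_le_maxabs _ _ _)).
apply: le_trans (enorm_caa_output_residual_le halpha hxi hFdec x0 rho_le1 hF c_sum) _.
set N := enorm (iter_residual F x0 0) in Rc_le *.
have kaN_ge0 : 0 <= k%:R * alpha * N by rewrite !mulr_ge0 ?enorm_ge0.
have := ler_wpM2r kaN_ge0 p_l1; have := ler_wpM2r kaN_ge0 c_l1.
lra.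
Qed.
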